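(* Let $h=\prod_{i=1}^{t}p_i^{s_i}$ with distinct primes $p_i$ and $s_i\ge1$, $m\le n$, and let $A=SDT\in\mathbb{Z}_h^{m\times n}$ where $S\in GL_m(\mathbb{Z}_h)$, $T\in GL_n(\mathbb{Z}_h)$ and $D=\mathrm{diag}(\prod_{i=1}^tp_i^{\alpha_{i1}},\ldots,\prod_{i=1}^tp_i^{\alpha_{im}})$ with $0\leq\alpha_{i1}\leq\cdots\leq\alpha_{im}\leq s_i$ for all $i$. Then the inner rank of $A$ equals $\max\{c\in\{1,\dots,m\}: (\alpha_{1c},\alpha_{2c},\ldots,\alpha_{tc})\neq(s_1,s_2,\ldots,s_t)\}$ (interpreted as $0$ if this set is empty).
   Context: For a commutative ring $R$ and nonzero $A\in R^{m\times n}$, the inner rank $\rho(A)$ is the least integer $r$ such that $A=BC$ with $B\in R^{m\times r}$, $C\in R^{r\times n}$; $\rho(0)=0$. $\mathrm{diag}(d_1,\ldots,d_m)$ for $m\le n$ denotes the $m\times n$ matrix with $d_1,\dots,d_m$ on the main diagonal and zeros elsewhere. *)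

From HB Require Import structures.
From mathcomp Require Import all_boot all_order all_algebra.
Set Implicit Arguments. Unset Strict Implicit. Unset Printing Implicit Defensive.
Import GRing.Theory.
Local Open Scope ring_scope.

Definition factors_through (R : comRingType) (m n : nat) (A : 'M[R]_(m, n)) (r : nat) : Prop :=
  exists (B : 'M[R]_(m, r)) (C : 'M[R]_(r, n)), A = B *m C.

Definition is_inner_rank (R : comRingType) (m n : nat) (A : 'M[R]_(m, n)) (r : nat) : Prop :=
  factors_through A r /\ forall r', factors_through A r' -> (r <= r')%N.

Definition rect_diag (R : ringType) (m n : nat) (d : 'I_m -> R) : 'M[R]_(m, n) :=
  \matrix_(i < m, j < n) (if (i == j :> nat) then d i else 0).

From HB Require Import structures.
From mathcomp Require Import all_boot all_order all_algebra.
Set Implicit Arguments.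
Unset Strict Implicit.
Unset Printing Implicit Defensive.

Import GRing.Theory.
Local Open Scope ring_scope.

(* Invertible S and T do not change the inner rank, so only the diagonal
   matrix D = diag(d_1, ..., d_m), d_c = prod_i p_i^(alpha_ic), matters.
   Let r be the last index whose exponent vector differs from (s_i).  Beyond r
   every d_c equals h = 0 in Z_h, so D factors through Z_h^r.  Conversely
   alpha_(i0 r) < s_(i0) for some i0, so d_1, ..., d_r all divide
   g = h / p_(i0); rescaling the columns of the leading r x r block of D turns
   it into g I_r.  If g I_r = B C through Z_h^r', lift B and C to integer
   matrices: their product M is congruent to g I modulo g p_(i0), so
   M = g (I + p_(i0) E) and det M <> 0 (reduce I + p_(i0) E modulo p_(i0)),
   whereas det M = 0 as soon as r' < r. *)

Section FactorsThrough.
Variable R : comRingType.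

Lemma factors_through_mull m m' n r (P : 'M[R]_(m', m)) (A : 'M_(m, n)) :
  factors_through A r -> factors_through (P *m A) r.
Proof. by move=> [B [C ->]]; exists (P *m B), C; rewrite mulmxA. Qed.

Lemma factors_through_mulr m n n' r (A : 'M[R]_(m, n)) (Q : 'M_(n, n')) :
  factors_through A r -> factors_through (A *m Q) r.
Proof. by move=> [B [C ->]]; exists B, (C *m Q); rewrite mulmxA. Qed.

Lemma factors_through_mxsub m n m' n' r (f : 'I_m' -> 'I_m) (g : 'I_n' -> 'I_n)
    (A : 'M[R]_(m, n)) :
  factors_through A r -> factors_through (mxsub f g A) r.
Proof. by move=> [B [C ->]]; exists (rowsub f B), (colsub g C); rewrite mxsub_mul. Qed.

Lemma rect_diag_factors_through m n r (d : 'I_m -> R) :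
  (forall c : 'I_m, (r <= c)%N -> d c = 0) -> factors_through (rect_diag n d) r.
Proof.
move=> d_r; exists (\matrix_(i, k) (if i == k :> nat then d i else 0)).
exists (\matrix_(k, j) (if k == j :> nat then 1 else 0)).
apply/matrixP=> i j; rewrite !mxE.
have [lt_ir | le_ri] := ltnP i r; last first.
  rewrite d_r // if_same big1 // => k _; rewrite !mxE.
  by rewrite (gtn_eqF (leq_trans (ltn_ord k) le_ri)) mul0r.
rewrite (bigD1 (Ordinal lt_ir)) //= big1 ?addr0 => [|k nk_i].
  by rewrite !mxE eqxx; case: (i == j :> nat); rewrite ?mulr1 ?mulr0.
rewrite !mxE; case: eqP => [ik|]; rewrite ?mul0r //.
by rewrite -(inj_eq val_inj) /= ik eqxx in nk_i.
Qed.

Lemma rect_diag_scalar_block m n r r' (d : 'I_m -> R) (e : 'I_r -> R) (g : R)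
    (le_rm : (r <= m)%N) (le_rn : (r <= n)%N) :
  (forall c : 'I_r, d (widen_ord le_rm c) * e c = g) ->
  factors_through (rect_diag n d) r' -> factors_through (g%:M : 'M_r) r'.
Proof.
move=> de /(factors_through_mxsub (widen_ord le_rm) (widen_ord le_rn)).
move=> /(factors_through_mulr (diag_mx (\row_c e c))).
suff -> : mxsub (widen_ord le_rm) (widen_ord le_rn) (rect_diag n d) *m
          diag_mx (\row_c e c) = g%:M by [].
apply/matrixP=> i j; rewrite mul_mx_diag !mxE /=.
have [<-|neq_ij] := eqVneq i j; first by rewrite eqxx de.
by rewrite ifN ?mul0r.
Qed.

End FactorsThrough.

Lemma factors_through_unitmx (R : comUnitRingType) m n r
    (S : 'M[R]_m) (A : 'M_(m, n)) (T : 'M_n) :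
  S \in unitmx -> T \in unitmx ->
  factors_through (S *m A *m T) r <-> factors_through A r.
Proof.
move=> uS uT; split=> [|/(factors_through_mull S)/(factors_through_mulr T)//].
move=> /(factors_through_mull (invmx S))/(factors_through_mulr (invmx T)).
by rewrite -mulmxA mulmxK // mulKmx.
Qed.

Lemma dvdz_Zp (h : nat) (z : int) : (1 < h)%N -> (h %| z)%Z = (z%:~R == 0 :> 'Z_h).
Proof.
move=> h_gt1; have dvdn_Zp k : (h %| k)%N = (k%:R == 0 :> 'Z_h).
  by rewrite -val_eqE /= val_Zp_nat.
by case: z => k; rewrite ?NegzE ?rmorphN ?oppr_eq0 dvdzE /= dvdn_Zp.
Qed.

Lemma det_mulmx_thin (R : idomainType) r r' (B : 'M[R]_(r, r')) (C : 'M_(r', r)) :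
  (r' < r)%N -> \det (B *m C) = 0.
Proof.
move=> lt_r'r; apply/eqP; rewrite -tofrac_eq0 -det_map_mx map_mxM.
apply: contraTT lt_r'r; rewrite -unitfE -unitmxE -leqNgt => /mxrank_unit <-.
exact: leq_trans (mxrankM_maxr _ _) (rank_leq_row _).
Qed.

Lemma det_congr1_modp_neq0 (p r : nat) (N : 'M[int]_r) :
  prime p -> (forall i j, (p %| N i j - (i == j)%:Z)%Z) -> \det N != 0.
Proof.
move=> p_pr N_1; have toFp_1 : map_mx (intr : {rmorphism int -> 'F_p}) N = 1%:M.
  apply/matrixP=> i j; apply/eqP; rewrite !mxE -subr_eq0.
  by have := N_1 i j; rewrite (dvdz_pcharf (pchar_Fp p_pr)) rmorphB.
apply/eqP=> detN0; have := det_map_mx (intr : {rmorphism int -> 'F_p}) N.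
by rewrite toFp_1 det1 detN0 rmorph0 => /eqP; rewrite oner_eq0.
Qed.

Lemma Zp_scalar_not_factors_through (h g p r r' : nat) :
  h = (g * p)%N -> prime p -> (0 < g)%N -> (r' < r)%N ->
  ~ factors_through ((g%:R)%:M : 'M['Z_h]_r) r'.
Proof.
move=> def_h p_pr g_gt0 lt_r'r [B [C gBC]].
have h_gt1 : (1 < h)%N by rewrite def_h (leq_trans (prime_gt1 p_pr)) ?leq_pmull.
pose lift m n (A : 'M['Z_h]_(m, n)) := \matrix_(i, j) (A i j : nat)%:Z.
have liftK m n (A : 'M_(m, n)) : map_mx (intr : {rmorphism int -> 'Z_h}) (lift m n A) = A.
  by apply/matrixP=> i j; rewrite !mxE; apply: natr_Zp.
pose M := lift _ _ B *m lift _ _ C.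
have detM0 : \det M = 0 := det_mulmx_thin _ _ lt_r'r.
have M_modh : map_mx (intr : {rmorphism int -> 'Z_h}) M = (g%:R)%:M.
  by rewrite /M map_mxM !liftK gBC.
clearbody M.
have M_congr i j : (h %| M i j - (i == j)%:Z * g%:Z)%Z.
  move/matrixP: M_modh => /(_ i j); rewrite !mxE => M_ij.
  rewrite dvdz_Zp // rmorphB rmorphM /= M_ij.
  by case: (i == j); rewrite ?mul1r ?mul0r subrr.
pose q i j := ((M i j - (i == j)%:Z * g%:Z) %/ h)%Z.
pose N := \matrix_(i, j) ((i == j)%:Z + q i j * p%:Z).
have M_gN : M = g%:Z *: N.
  apply/matrixP=> i j; rewrite !mxE mulrDr mulrCA -[g%:Z * p%:Z]PoszM -def_h.
  by rewrite divzK ?M_congr // [g%:Z * _]mulrC addrC subrK.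
have N_congr1 i j : (p %| N i j - (i == j)%:Z)%Z.
  by rewrite mxE [_ + q i j * _]addrC addrK dvdz_mull.
move: detM0; rewrite M_gN detZ => /eqP.
rewrite mulf_eq0 (negbTE (det_congr1_modp_neq0 p_pr N_congr1)) orbF.
by rewrite expf_eq0 eqz_nat eqn0Ngt g_gt0 andbF.
Qed.

Lemma prod_expn_subnK (I : finType) (p a b : I -> nat) :
  (forall i, a i <= b i)%N ->
  (\prod_i p i ^ a i * \prod_i p i ^ (b i - a i) = \prod_i p i ^ b i)%N.
Proof.
by move=> le_ab; rewrite -big_split; apply: eq_bigr => i _ /=; rewrite -expnD subnKC.
Qed.

Lemma prod_expn_pred (I : finType) (p b : I -> nat) (i0 : I) : (0 < b i0)%N ->
  (\prod_i p i ^ b i = \prod_i p i ^ (b i - (i == i0)) * p i0)%N.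
Proof.
move=> b_gt0; rewrite (bigD1 i0) // [in RHS](bigD1 i0) //= eqxx subn1.
rewrite -{1}(prednK b_gt0) expnS.
rewrite [in RHS](eq_bigr (fun i => p i ^ b i)%N) => [|i /negbTE ->]; last by rewrite subn0.
by rewrite -mulnA mulnC.
Qed.

Section DiagonalInnerRank.
Variables (t m n : nat) (p s : 'I_t -> nat) (alpha : 'I_t -> 'I_m -> nat).
Hypothesis t_gt0 : (0 < t)%N.
Hypothesis p_prime : forall i, prime (p i).
Hypothesis s_gt0 : forall i, (0 < s i)%N.
Hypothesis le_mn : (m <= n)%N.
Hypothesis alpha_mono :
  forall i (c1 c2 : 'I_m), (c1 <= c2)%N -> (alpha i c1 <= alpha i c2)%N.
Hypothesis alpha_le : forall i c, (alpha i c <= s i)%N.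

Local Notation h := (\prod_(i < t) p i ^ s i)%N.
Local Notation D :=
  (rect_diag n (fun c : 'I_m => ((\prod_(i < t) p i ^ alpha i c)%N%:R : 'Z_h))).
Local Notation r := (\max_(c < m | [exists i, alpha i c != s i]) c.+1)%N.

Lemma diag_factors_through : factors_through D r.
Proof.
have h_gt1 : (1 < h)%N.
  pose i0 := Ordinal t_gt0.
  have p_s_gt1 : (1 < p i0 ^ s i0)%N by rewrite -(exp1n (s i0)) ltn_exp2r ?prime_gt1.
  rewrite (bigD1 i0) //= (leq_trans p_s_gt1) // leq_pmulr // prodn_gt0 // => i.
  by rewrite expn_gt0 prime_gt0.
apply: rect_diag_factors_through => c le_rc.
have alpha_s i : alpha i c = s i.
  apply/eqP; apply: contraTT le_rc => ne_i; rewrite -ltnNge.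
  by apply: leq_bigmax_cond; apply/existsP; exists i.
have -> : (\prod_(i < t) p i ^ alpha i c)%N = h.
  by apply: eq_bigr => i _; rewrite alpha_s.
exact: pchar_Zp.
Qed.

Lemma diag_not_factors_through r' : (r' < r)%N -> ~ factors_through D r'.
Proof.
move=> lt_r'r.
pose P := [pred c : 'I_m | [exists i, alpha i c != s i]].
have P_gt0 : (0 < #|P|)%N.
  by rewrite lt0n; apply: contraTneq lt_r'r => /card0_eq P0; rewrite big_pred0.
have [c0 /existsP[i0 ne_i0] r_c0] := eq_bigmax_cond (fun c : 'I_m => c.+1) P_gt0.
have {}r_c0 : r = c0.+1 := r_c0.
have lt_alpha_s : (alpha i0 c0 < s i0)%N by rewrite ltn_neqAle ne_i0 alpha_le.
have le_rm : (r <= m)%N by rewrite r_c0.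
pose s' i := (s i - (i == i0))%N.
have le_alpha_s' (c : 'I_r) i : (alpha i (widen_ord le_rm c) <= s' i)%N.
  rewrite /s'; case: eqP => [->|_]; last by rewrite subn0.
  rewrite subn1 -ltnS prednK //; apply: (leq_ltn_trans _ lt_alpha_s).
  by apply: alpha_mono; rewrite /= -ltnS -r_c0.
move=> D_r'.
apply: (Zp_scalar_not_factors_through (prod_expn_pred p (s_gt0 i0)) (p_prime i0) _ lt_r'r).
  by rewrite prodn_gt0 // => i; rewrite expn_gt0 prime_gt0.
apply: (rect_diag_scalar_block (le_rm := le_rm)
  (e := fun c => (\prod_(i < t) p i ^ (s' i - alpha i (widen_ord le_rm c)))%:R)
  (leq_trans le_rm le_mn) _ D_r').
by move=> c; rewrite -natrM (prod_expn_subnK p (le_alpha_s' c)).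
Qed.

End DiagonalInnerRank.

Theorem lemma2p11 (t : nat) (p s : 'I_t -> nat)
  (ht : (0 < t)%N)
  (hp : forall i, prime (p i)) (hpinj : injective p)
  (hs : forall i, (0 < s i)%N)
  (m n : nat) (hmn : (m <= n)%N)
  (alpha : 'I_t -> 'I_m -> nat)
  (halpha_mono : forall i (c1 c2 : 'I_m), (c1 <= c2)%N -> (alpha i c1 <= alpha i c2)%N)
  (halpha_le : forall i c, (alpha i c <= s i)%N)
  (S : 'M['Z_(\prod_(i < t) p i ^ s i)]_m)
  (T : 'M['Z_(\prod_(i < t) p i ^ s i)]_n)
  (hS : S \in unitmx) (hT : T \in unitmx) :
  is_inner_rank
    (S *m rect_diag n (fun c : 'I_m => ((\prod_(i < t) p i ^ alpha i c)%N)%:R) *m T)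
    (\max_(c < m | [exists i, alpha i c != s i]) c.+1)%N.
Proof.
split=> [|r' /(factors_through_unitmx _ _ hS hT) D_r'].
  by apply/(factors_through_unitmx _ _ hS hT); apply: diag_factors_through ht hp hs.
rewrite leqNgt; apply/negP => lt_r'r.
exact: (diag_not_factors_through hp hs hmn halpha_mono halpha_le lt_r'r D_r').
Qed.
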